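(* Assume (A1)–(A4). For the noisy ADMM iterates, let $E_k^\delta=\rho_1\|Ax_k^\delta-b^\delta\|^2+\rho_2\|Wx_k^\delta-y_k^\delta\|^2+\rho_2\|y_k^\delta-y_{k-1}^\delta\|^2$ for $k\ge1$. Then for all $k\ge1$ $$E_{k+1}^\delta-E_k^\delta\le-\rho_1\|A(x_{k+1}^\delta-x_k^\delta)\|^2-4c_0\|y_{k+1}^\delta-y_k^\delta\|^2.$$ Consequently $\{E_k^\delta\}$ is monotonically nonincreasing, and for all integers $1\le m<n$, $$\sum_{k=m}^{n-1}\|y_{k+1}^\delta-y_k^\delta\|^2\le\frac{1}{4c_0}E_m^\delta,\qquad (n-m)\rho_2\|y_n^\delta-y_{n-1}^\delta\|^2\le\sum_{k=m+1}^nE_k^\delta.$$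
   Context: $\mathcal X,\mathcal Y,\mathcal H$ are real Hilbert spaces. Standing assumptions: (A1) $A:\mathcal X\to\mathcal H$ is bounded linear. (A2) $f:\mathcal Y\to(-\infty,\infty]$ is proper, lower semicontinuous and strongly convex with constant $c_0>0$: $f(ty_1+(1-t)y_2)+c_0t(1-t)\|y_1-y_2\|^2\le tf(y_1)+(1-t)f(y_2)$ for all $y_1,y_2$, $t\in[0,1]$. (A3) $W:\mathscr D(W)\subset\mathcal X\to\mathcal Y$ is a densely defined closed linear operator. (A4) There is $c_1>0$ with $\|Ax\|^2+\|Wx\|^2\ge c_1\|x\|^2$ for all $x\in\mathscr D(W)$. Noisy ADMM: given $b^\delta\in\mathcal H$, fix $\rho_1,\rho_2>0$ and initial $y_0^\delta\in\mathcal Y$, $\lambda_0^\delta\in\mathcal H$, $\mu_0^\delta\in\mathcal Y$. For $k=0,1,\dots$: $x_{k+1}^\delta=\arg\min_{x\in\mathscr D(W)}\{\langle\lambda_k^\delta,Ax\rangle+\langle\mu_k^\delta,Wx\rangle+\frac{\rho_1}{2}\|Ax-b^\delta\|^2+\frac{\rho_2}{2}\|Wx-y_k^\delta\|^2\}$, $y_{k+1}^\delta=\arg\min_{y\in\mathcal Y}\{f(y)-\langle\mu_k^\delta,y\rangle+\frac{\rho_2}{2}\|Wx_{k+1}^\delta-y\|^2\}$, $\lambda_{k+1}^\delta=\lambda_k^\delta+\rho_1(Ax_{k+1}^\delta-b^\delta)$, $\mu_{k+1}^\delta=\mu_k^\delta+\rho_2(Wx_{k+1}^\delta-y_{k+1}^\delta)$.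 (These minimizers exist and are unique.) *)

From Stdlib Require Import Reals Lra List.
Import ListNotations.
Open Scope R_scope.

Record HilbertSpace := {
  hcar :> Type;
  hadd : hcar -> hcar -> hcar;
  hopp : hcar -> hcar;
  hzero : hcar;
  hscal : R -> hcar -> hcar;
  hinner : hcar -> hcar -> R;
  hadd_comm : forall x y, hadd x y = hadd y x;
  hadd_assoc : forall x y z, hadd x (hadd y z) = hadd (hadd x y) z;
  hadd_zero : forall x, hadd x hzero = x;
  hadd_opp : forall x, hadd x (hopp x) = hzero;
  hscal_one : forall x, hscal 1 x = x;
  hscal_assoc : forall a b x, hscal a (hscal b x) = hscal (a * b) x;
  hscal_distr_l : forall a x y, hscal a (hadd x y) = hadd (hscal a x) (hscal a y);
  hscal_distr_r : forall a b x, hscal (a + b) x = hadd (hscal a x) (hscal b x);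
  hinner_sym : forall x y, hinner x y = hinner y x;
  hinner_add_l : forall x y z, hinner (hadd x y) z = hinner x z + hinner y z;
  hinner_scal_l : forall a x y, hinner (hscal a x) y = a * hinner x y;
  hinner_pos : forall x, 0 <= hinner x x;
  hinner_def : forall x, hinner x x = 0 -> x = hzero;
  hcomplete : forall u : nat -> hcar,
    (forall eps, 0 < eps -> exists N, forall m n, (N <= m)%nat -> (N <= n)%nat ->
        sqrt (hinner (hadd (u m) (hopp (u n))) (hadd (u m) (hopp (u n)))) < eps) ->
    exists l, forall eps, 0 < eps -> exists N, forall n, (N <= n)%nat ->
        sqrt (hinner (hadd (u n) (hopp l)) (hadd (u n) (hopp l))) < eps
}.

Arguments hadd {h}. Arguments hopp {h}. Arguments hzero {h}.
Arguments hscal {h}. Arguments hinner {h}.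

Definition hsub {X : HilbertSpace} (x y : X) : X := hadd x (hopp y).
Definition hnorm {X : HilbertSpace} (x : X) : R := sqrt (hinner x x).

Definition hconv {X : HilbertSpace} (u : nat -> X) (l : X) : Prop :=
  forall eps, 0 < eps -> exists N, forall n, (N <= n)%nat -> hnorm (hsub (u n) l) < eps.

Definition bounded_linear {X Y : HilbertSpace} (A : X -> Y) : Prop :=
  (forall x y, A (hadd x y) = hadd (A x) (A y)) /\
  (forall a x, A (hscal a x) = hscal a (A x)) /\
  (exists C, forall x, hnorm (A x) <= C * hnorm x).

(** (A3) densely defined closed linear operator W : D(W) ⊂ X -> Y.
    The domain is the predicate D; values of W outside D are irrelevant. *)
Definition densely_defined_closed_linear {X Y : HilbertSpace}
    (D : X -> Prop) (W : X -> Y) : Prop :=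
  D hzero /\
  (forall x y, D x -> D y -> D (hadd x y)) /\
  (forall a x, D x -> D (hscal a x)) /\
  (forall x y, D x -> D y -> W (hadd x y) = hadd (W x) (W y)) /\
  (forall a x, D x -> W (hscal a x) = hscal a (W x)) /\
  (forall x eps, 0 < eps -> exists z, D z /\ hnorm (hsub x z) < eps) /\
  (forall (u : nat -> X) x y, (forall n, D (u n)) -> hconv u x ->
      hconv (fun n => W (u n)) y -> D x /\ W x = y).

Inductive ext := Fin (r : R) | PInf.

Definition ext_le (a b : ext) : Prop :=
  match a, b with
  | Fin r, Fin s => r <= s
  | _, PInf => True
  | PInf, Fin _ => False
  end.

Definition ext_plus_r (a : ext) (r : R) : ext :=
  match a with Fin s => Fin (s + r) | PInf => PInf end.

Definition proper_fun {Y : HilbertSpace} (f : Y -> ext) : Prop :=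
  exists y r, f y = Fin r.

Definition lsc {Y : HilbertSpace} (f : Y -> ext) : Prop :=
  forall y alpha, ext_le (Fin alpha) (f y) -> f y <> Fin alpha ->
    exists eps, 0 < eps /\ forall z, hnorm (hsub z y) < eps ->
      ext_le (Fin alpha) (f z) /\ f z <> Fin alpha.

(** strong convexity with constant c0 (convention: the inequality is
    trivial when the right-hand side is +oo) *)
Definition strongly_convex {Y : HilbertSpace} (f : Y -> ext) (c0 : R) : Prop :=
  forall y1 y2 r1 r2 t, f y1 = Fin r1 -> f y2 = Fin r2 -> 0 <= t <= 1 ->
    ext_le (ext_plus_r (f (hadd (hscal t y1) (hscal (1 - t) y2)))
                       (c0 * t * (1 - t) * (hnorm (hsub y1 y2)) ^ 2))
           (Fin (t * r1 + (1 - t) * r2)).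

(** sum_{k=m}^{n-1} g k *)
Definition rsum (g : nat -> R) (m n : nat) : R :=
  fold_right Rplus 0 (map g (seq m (n - m))).

(** The noisy ADMM recursion: x k (k >= 1), y, lam, mu are the iterates.
    x 0 is unused. Minimizers are characterised by the minimizing property
    (they exist and are unique). *)
Definition admm_iterates {X Y H : HilbertSpace} (A : X -> H) (D : X -> Prop)
    (W : X -> Y) (f : Y -> ext) (bd : H) (rho1 rho2 : R)
    (x : nat -> X) (y : nat -> Y) (lam : nat -> H) (mu : nat -> Y) : Prop :=
  forall k : nat,
    (D (x (S k)) /\
     forall z, D z ->
       hinner (lam k) (A (x (S k))) + hinner (mu k) (W (x (S k)))
       + rho1 / 2 * (hnorm (hsub (A (x (S k))) bd)) ^ 2
       + rho2 / 2 * (hnorm (hsub (W (x (S k))) (y k))) ^ 2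
       <= hinner (lam k) (A z) + hinner (mu k) (W z)
       + rho1 / 2 * (hnorm (hsub (A z) bd)) ^ 2
       + rho2 / 2 * (hnorm (hsub (W z) (y k))) ^ 2) /\
    (forall v,
       ext_le (ext_plus_r (f (y (S k)))
                 (- hinner (mu k) (y (S k))
                  + rho2 / 2 * (hnorm (hsub (W (x (S k))) (y (S k)))) ^ 2))
              (ext_plus_r (f v)
                 (- hinner (mu k) v
                  + rho2 / 2 * (hnorm (hsub (W (x (S k))) v)) ^ 2))) /\
    lam (S k) = hadd (lam k) (hscal rho1 (hsub (A (x (S k))) bd)) /\
    mu (S k) = hadd (mu k) (hscal rho2 (hsub (W (x (S k))) (y (S k)))).

(** E_k^delta, meaningful for k >= 1 *)
Definition admm_energy {X Y H : HilbertSpace} (A : X -> H) (W : X -> Y)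
    (bd : H) (rho1 rho2 : R) (x : nat -> X) (y : nat -> Y) (k : nat) : R :=
  rho1 * (hnorm (hsub (A (x k)) bd)) ^ 2
  + rho2 * (hnorm (hsub (W (x k)) (y k))) ^ 2
  + rho2 * (hnorm (hsub (y k) (y (k - 1)%nat))) ^ 2.

(** The optimality condition of the x-step, taken at two consecutive steps and
    differenced along [x_{k+1} - x_k], together with the strong monotonicity of
    the subgradients [mu_k] of [f] at the [y_k] (a consequence of the strong
    convexity of [f]), yields the decrease of [E_k] by polarization; the two
    summed estimates then follow by telescoping and from the monotonicity of
    [E_k] together with [rho2 |y_n - y_(n-1)|^2 <= E_n]. *)

From Stdlib Require Import Reals Lra Lia.
Open Scope R_scope.

Lemma hinner_add_r (X : HilbertSpace) (u v w : X) :
  hinner u (hadd v w) = hinner u v + hinner u w.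
Proof. rewrite !(hinner_sym X u). apply hinner_add_l. Qed.

Lemma hinner_scal_r (X : HilbertSpace) a (u v : X) :
  hinner u (hscal a v) = a * hinner u v.
Proof. rewrite !(hinner_sym X u). apply hinner_scal_l. Qed.

Lemma hinner_zero_l (X : HilbertSpace) (v : X) : hinner hzero v = 0.
Proof.
  assert (E : hinner (hadd (@hzero X) hzero) v = hinner hzero v)
    by now rewrite hadd_zero.
  rewrite hinner_add_l in E. lra.
Qed.

Lemma hinner_opp_l (X : HilbertSpace) (u v : X) : hinner (hopp u) v = - hinner u v.
Proof.
  assert (E : hinner (hadd u (hopp u)) v = 0)
    by (rewrite hadd_opp; apply hinner_zero_l).
  rewrite hinner_add_l in E. lra.
Qed.

Lemma hinner_opp_r (X : HilbertSpace) (u v : X) : hinner u (hopp v) = - hinner u v.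
Proof. rewrite !(hinner_sym X u). apply hinner_opp_l. Qed.

Lemma hnorm_sqr (X : HilbertSpace) (u : X) : hnorm u ^ 2 = hinner u u.
Proof. apply pow2_sqrt, hinner_pos. Qed.

Lemma hadd_self_eq0 (X : HilbertSpace) (u : X) : u = hadd u u -> u = hzero.
Proof.
  intros E.
  assert (E2 : hadd u (hopp u) = hadd (hadd u u) (hopp u)) by now rewrite <- E.
  rewrite <- hadd_assoc, !hadd_opp, hadd_zero in E2. now symmetry.
Qed.

Lemma hopp_unique (X : HilbertSpace) (w u : X) : hadd w u = hzero -> w = hopp u.
Proof.
  intros E.
  rewrite <- (hadd_zero X w), <- (hadd_opp X u), hadd_assoc, E, hadd_comm, hadd_zero.
  reflexivity.
Qed.

Section Additive.

Variables (X Y : HilbertSpace) (A : X -> Y).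
Hypothesis A_add : forall u v, A (hadd u v) = hadd (A u) (A v).

Lemma additive_hzero : A hzero = hzero.
Proof. apply hadd_self_eq0. now rewrite <- A_add, hadd_zero. Qed.

Lemma additive_hopp u : A (hopp u) = hopp (A u).
Proof.
  apply hopp_unique.
  now rewrite <- A_add, hadd_comm, hadd_opp, additive_hzero.
Qed.

Lemma additive_hsub u v : A (hsub u v) = hsub (A u) (A v).
Proof. unfold hsub. now rewrite A_add, additive_hopp. Qed.

End Additive.

(* Identities between inner products are checked by expanding everything into
   inner products of the atoms, rewriting [hinner b a] to [hinner a b], and
   calling [lra]; the hypotheses to be used must be reverted into the goal. *)
Ltac inner_expand :=
  unfold hsub;
  repeat progress rewrite ?hnorm_sqr, ?hinner_add_l, ?hinner_add_r,
    ?hinner_scal_l, ?hinner_scal_r, ?hinner_opp_l, ?hinner_opp_r.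

Ltac inner_sym :=
  repeat match goal with
  | |- context [@hinner ?X ?a ?b] =>
      match goal with
      | |- context [@hinner X b a] => progress rewrite (hinner_sym X b a)
      end
  end.

Ltac inner_lra := inner_expand; inner_sym; intros; lra.

Lemma Rle_0_of_quadratic_ge0 (g q : R) :
  (forall t, 0 < t <= 1 -> 0 <= t * g + t ^ 2 * q) -> 0 <= g.
Proof.
  intros Hq. apply Rnot_lt_le. intros Hg.
  assert (HK : 0 < Rabs q + 1) by (pose proof (Rabs_pos q); lra).
  set (t := Rmin 1 (- g / (2 * (Rabs q + 1)))).
  assert (Ht0 : 0 < t).
  { apply Rmin_glb_lt; [lra|]. apply Rdiv_lt_0_compat; lra. }
  assert (Ht1 : t <= 1) by apply Rmin_l.
  assert (Htg : t * (2 * (Rabs q + 1)) <= - g).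
  { assert (Ht : t <= - g / (2 * (Rabs q + 1))) by apply Rmin_r.
    apply (Rmult_le_compat_r (2 * (Rabs q + 1))) in Ht; [|lra].
    unfold Rdiv in Ht. rewrite Rmult_assoc, Rinv_l in Ht; lra. }
  specialize (Hq t (conj Ht0 Ht1)).
  pose proof (Rle_abs q). nra.
Qed.

Lemma Req_0_of_quadratic_ge0 (g q : R) :
  (forall t, 0 <= t * g + t ^ 2 * q) -> g = 0.
Proof.
  intros Hq. apply Rle_antisym.
  - enough (0 <= - g) by lra.
    apply (Rle_0_of_quadratic_ge0 _ q). intros t _.
    specialize (Hq (- t)). lra.
  - apply (Rle_0_of_quadratic_ge0 _ q). intros t _. apply Hq.
Qed.

(* The minimizer [ys] of [f(v) - <mu, v> + rho/2 |w - v|^2] satisfies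
   [mu + rho (w - ys) \in \partial f(ys)], with the strong-convexity bonus. *)
Lemma prox_strong_subgradient (Y : HilbertSpace) (f : Y -> ext) (c0 rho : R)
  (f_convex : strongly_convex f c0) (mu w ys : Y) (fy : R) (Hfy : f ys = Fin fy)
  (Hmin : forall v,
     ext_le (ext_plus_r (f ys) (- hinner mu ys + rho / 2 * (hnorm (hsub w ys)) ^ 2))
            (ext_plus_r (f v) (- hinner mu v + rho / 2 * (hnorm (hsub w v)) ^ 2)))
  (v : Y) (fv : R) (Hfv : f v = Fin fv) :
  fy + hinner (hadd mu (hscal rho (hsub w ys))) (hsub v ys)
     + c0 * (hnorm (hsub v ys)) ^ 2 <= fv.
Proof.
  set (g := fv - (fy + hinner (hadd mu (hscal rho (hsub w ys))) (hsub v ys)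
                     + c0 * (hnorm (hsub v ys)) ^ 2)).
  enough (0 <= g) by (unfold g in *; lra).
  apply (Rle_0_of_quadratic_ge0 g ((c0 + rho / 2) * (hnorm (hsub v ys)) ^ 2)).
  intros t Ht.
  set (vt := hadd (hscal t v) (hscal (1 - t) ys)).
  pose proof (f_convex v ys fv fy t Hfv Hfy ltac:(lra)) as Hconv.
  pose proof (Hmin vt) as Hm. fold vt in Hconv.
  rewrite Hfy in Hm.
  destruct (f vt) as [ft|]; [|contradiction]. cbn [ext_le ext_plus_r] in Hconv, Hm.
  unfold g, vt in *. clear g Hmin. revert Hconv Hm. inner_lra.
Qed.

(* With [a_k = p_k - b], [r_k = w_k - y_k] and [s_k = y_k - y_(k-1)], the
   difference of the energies equals
   [- r1 |a_1 - a_0|^2 - r2 |r_1 - r_0 + s_1 - s_0|^2 - 2 r2 <r_1, s_1>]. *)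
Lemma energy_step_inequality (H Y : HilbertSpace) (p0 p1 b : H) (w0 w1 y1 y0 ym : Y)
  (r1 r2 c : R) :
  0 <= r2 ->
  r1 * hinner (hsub p1 b) (hsub p1 p0)
    + r2 * hinner (hadd (hsub w1 y1) (hsub (hsub y1 y0) (hsub y0 ym))) (hsub w1 w0) = 0 ->
  2 * c * (hnorm (hsub y1 y0)) ^ 2 <= r2 * hinner (hsub w1 y1) (hsub y1 y0) ->
  r1 * (hnorm (hsub p1 b)) ^ 2 + r2 * (hnorm (hsub w1 y1)) ^ 2
    + r2 * (hnorm (hsub y1 y0)) ^ 2
  - (r1 * (hnorm (hsub p0 b)) ^ 2 + r2 * (hnorm (hsub w0 y0)) ^ 2
    + r2 * (hnorm (hsub y0 ym)) ^ 2)
  <= - r1 * (hnorm (hsub p1 p0)) ^ 2 - 4 * c * (hnorm (hsub y1 y0)) ^ 2.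
Proof.
  intros Hr2.
  assert (Hsq : 0 <= r2 * (hnorm (hsub (hsub w1 w0) (hsub y0 ym))) ^ 2)
    by (apply Rmult_le_pos; [lra | apply pow2_ge_0]).
  revert Hsq. inner_lra.
Qed.

Section ADMM.

Variables X Y H : HilbertSpace.
Variables (A : X -> H) (D : X -> Prop) (W : X -> Y) (f : Y -> ext).
Variables (c0 rho1 rho2 : R) (bd : H).
Variables (x : nat -> X) (y : nat -> Y) (lam : nat -> H) (mu : nat -> Y).

Hypothesis A_add : forall u v, A (hadd u v) = hadd (A u) (A v).
Hypothesis A_scal : forall a u, A (hscal a u) = hscal a (A u).
Hypothesis D_add : forall u v, D u -> D v -> D (hadd u v).
Hypothesis D_scal : forall a u, D u -> D (hscal a u).
Hypothesis W_add : forall u v, D u -> D v -> W (hadd u v) = hadd (W u) (W v).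
Hypothesis W_scal : forall a u, D u -> W (hscal a u) = hscal a (W u).
Hypothesis f_proper : proper_fun f.
Hypothesis f_convex : strongly_convex f c0.
Hypothesis rho2_ge0 : 0 <= rho2.
Hypothesis iter : admm_iterates A D W f bd rho1 rho2 x y lam mu.

Lemma admm_x_stationary k u : D u ->
  hinner (lam (S k)) (A u)
  + hinner (hadd (mu (S k)) (hscal rho2 (hsub (y (S k)) (y k)))) (W u) = 0.
Proof.
  intros Du. destruct (iter k) as [[Dx Hmin] [_ [Hlam Hmu]]].
  rewrite Hlam, Hmu.
  apply (Req_0_of_quadratic_ge0 _
           (rho1 / 2 * (hnorm (A u)) ^ 2 + rho2 / 2 * (hnorm (W u)) ^ 2)).
  intros t.
  specialize (Hmin (hadd (x (S k)) (hscal t u)) (D_add _ _ Dx (D_scal _ _ Du))).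
  rewrite A_add, A_scal, (W_add _ _ Dx (D_scal _ _ Du)), (W_scal _ _ Du) in Hmin.
  revert Hmin. inner_lra.
Qed.

Lemma admm_y_finite k : exists r, f (y (S k)) = Fin r.
Proof.
  destruct f_proper as [v [r Hr]].
  destruct (iter k) as [_ [Hmin _]]. specialize (Hmin v). rewrite Hr in Hmin.
  destruct (f (y (S k))) as [s|]; [now exists s | contradiction].
Qed.

Lemma admm_y_subgradient k v fy fv :
  f (y (S k)) = Fin fy -> f v = Fin fv ->
  fy + hinner (mu (S k)) (hsub v (y (S k))) + c0 * (hnorm (hsub v (y (S k)))) ^ 2 <= fv.
Proof.
  intros Hfy Hfv. destruct (iter k) as [_ [Hmin [_ Hmu]]].
  rewrite Hmu. exact (prox_strong_subgradient _ _ _ _ f_convex _ _ _ _ Hfy Hmin _ _ Hfv).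
Qed.

Lemma admm_mu_monotone j :
  2 * c0 * (hnorm (hsub (y (S (S j))) (y (S j)))) ^ 2
  <= rho2 * hinner (hsub (W (x (S (S j)))) (y (S (S j)))) (hsub (y (S (S j))) (y (S j))).
Proof.
  destruct (admm_y_finite j) as [f1 Hf1], (admm_y_finite (S j)) as [f2 Hf2].
  pose proof (admm_y_subgradient (S j) _ _ _ Hf2 Hf1) as Hsub2.
  pose proof (admm_y_subgradient j _ _ _ Hf1 Hf2) as Hsub1.
  destruct (iter (S j)) as [_ [_ [_ Hmu]]]. rewrite Hmu in Hsub2.
  revert Hsub1 Hsub2. inner_lra.
Qed.

Lemma admm_energy_decrease k : (1 <= k)%nat ->
  admm_energy A W bd rho1 rho2 x y (S k) - admm_energy A W bd rho1 rho2 x y k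
  <= - rho1 * (hnorm (A (hsub (x (S k)) (x k)))) ^ 2
     - 4 * c0 * (hnorm (hsub (y (S k)) (y k))) ^ 2.
Proof.
  intros Hk. destruct k as [|j]; [lia|].
  unfold admm_energy. rewrite (additive_hsub _ _ A A_add).
  rewrite !Nat.sub_succ, !Nat.sub_0_r.
  apply energy_step_inequality; [exact rho2_ge0 | | apply admm_mu_monotone].
  destruct (iter j) as [[Dx1 _] _], (iter (S j)) as [[Dx2 _] [_ [Hlam Hmu]]].
  pose proof (admm_x_stationary (S j) _ Dx2) as Hst22.
  pose proof (admm_x_stationary (S j) _ Dx1) as Hst21.
  pose proof (admm_x_stationary j _ Dx2) as Hst12.
  pose proof (admm_x_stationary j _ Dx1) as Hst11.
  rewrite Hlam, Hmu in Hst22, Hst21.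
  revert Hst22 Hst21 Hst12 Hst11. inner_lra.
Qed.

End ADMM.

Lemma admm_energy_ge_step (X Y H : HilbertSpace) (A : X -> H) (W : X -> Y) (bd : H)
  (rho1 rho2 : R) (x : nat -> X) (y : nat -> Y) k :
  0 <= rho1 -> 0 <= rho2 ->
  rho2 * (hnorm (hsub (y k) (y (k - 1)%nat))) ^ 2 <= admm_energy A W bd rho1 rho2 x y k.
Proof.
  intros Hr1 Hr2. unfold admm_energy.
  pose proof (pow2_ge_0 (hnorm (hsub (A (x k)) bd))).
  pose proof (pow2_ge_0 (hnorm (hsub (W (x k)) (y k)))). nra.
Qed.

Lemma rsum_cons (g : nat -> R) m n : (m < n)%nat -> rsum g m n = g m + rsum g (S m) n.
Proof. intros Hmn. unfold rsum. now replace (n - m)%nat with (S (n - S m)) by lia. Qed.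

Lemma rsum_telescope_le (g e : nat -> R) c m n :
  (forall k, (m <= k < n)%nat -> c * g k <= e k - e (S k)) -> (m <= n)%nat ->
  c * rsum g m n <= e m - e n.
Proof.
  intros Hstep Hmn. remember (n - m)%nat as d eqn:Hd. revert m Hstep Hmn Hd.
  induction d as [|d IH]; intros m Hstep Hmn Hd.
  - replace n with m by lia. unfold rsum. rewrite Nat.sub_diag. simpl. lra.
  - rewrite rsum_cons by lia.
    assert (IHm := IH (S m) ltac:(intros; apply Hstep; lia) ltac:(lia) ltac:(lia)).
    specialize (Hstep m ltac:(lia)). lra.
Qed.

Lemma rsum_ge_const (g : nat -> R) c m n :
  (forall k, (m <= k < n)%nat -> c <= g k) -> INR (n - m) * c <= rsum g m n.
Proof.
  intros Hg. remember (n - m)%nat as d eqn:Hd. revert m Hg Hd.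
  induction d as [|d IH]; intros m Hg Hd.
  - unfold rsum. rewrite <- Hd. simpl. lra.
  - rewrite rsum_cons, S_INR by lia.
    assert (IHm := IH (S m) ltac:(intros; apply Hg; lia) ltac:(lia)).
    specialize (Hg m ltac:(lia)). lra.
Qed.

Lemma nonincreasing_le (e : nat -> R) m k n :
  (forall j, (m <= j)%nat -> e (S j) <= e j) -> (m <= k <= n)%nat -> e n <= e k.
Proof.
  intros He Hkn. induction n as [|n IH].
  - replace k with 0%nat by lia. lra.
  - destruct (Nat.eq_dec k (S n)) as [->|Hk]; [lra|].
    specialize (He n ltac:(lia)). specialize (IH ltac:(lia)). lra.
Qed.

Theorem lemma2p9 (X Y H : HilbertSpace) (A : X -> H) (f : Y -> ext)
  (D : X -> Prop) (W : X -> Y) (c0 c1 : R)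
  (HA1 : bounded_linear A)
  (Hc0 : 0 < c0) (Hproper : proper_fun f) (Hlsc : lsc f)
  (Hconv : strongly_convex f c0)
  (HA3 : densely_defined_closed_linear D W)
  (Hc1 : 0 < c1)
  (HA4 : forall x, D x -> (hnorm (A x)) ^ 2 + (hnorm (W x)) ^ 2 >= c1 * (hnorm x) ^ 2)
  (bd : H) (rho1 rho2 : R) (Hrho1 : 0 < rho1) (Hrho2 : 0 < rho2)
  (x : nat -> X) (y : nat -> Y) (lam : nat -> H) (mu : nat -> Y)
  (Hiter : admm_iterates A D W f bd rho1 rho2 x y lam mu) :
  let E := admm_energy A W bd rho1 rho2 x y in
  (forall k, (1 <= k)%nat ->
     E (S k) - E k <= - rho1 * (hnorm (A (hsub (x (S k)) (x k)))) ^ 2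
                      - 4 * c0 * (hnorm (hsub (y (S k)) (y k))) ^ 2) /\
  (forall k, (1 <= k)%nat -> E (S k) <= E k) /\
  (forall m n, (1 <= m)%nat -> (m < n)%nat ->
     rsum (fun k => (hnorm (hsub (y (S k)) (y k))) ^ 2) m n <= / (4 * c0) * E m /\
     INR (n - m) * rho2 * (hnorm (hsub (y n) (y (n - 1)%nat))) ^ 2
       <= rsum E (S m) (S n)).
Proof.
  intros E.
  destruct HA1 as [A_add [A_scal _]], HA3 as [_ [D_add [D_scal [W_add [W_scal _]]]]].
  assert (Hdecr : forall k, (1 <= k)%nat ->
     E (S k) - E k <= - rho1 * (hnorm (A (hsub (x (S k)) (x k)))) ^ 2
                      - 4 * c0 * (hnorm (hsub (y (S k)) (y k))) ^ 2)
    by (intros; eapply admm_energy_decrease; eauto; lra).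
  assert (HE : forall k, rho2 * (hnorm (hsub (y k) (y (k - 1)%nat))) ^ 2 <= E k)
    by (intros; apply admm_energy_ge_step; lra).
  assert (Hstep : forall k, (1 <= k)%nat ->
     4 * c0 * (hnorm (hsub (y (S k)) (y k))) ^ 2 <= E k - E (S k)).
  { intros k Hk. specialize (Hdecr k Hk).
    pose proof (pow2_ge_0 (hnorm (A (hsub (x (S k)) (x k))))). nra. }
  assert (Hmono : forall k, (1 <= k)%nat -> E (S k) <= E k).
  { intros k Hk. specialize (Hstep k Hk).
    pose proof (pow2_ge_0 (hnorm (hsub (y (S k)) (y k)))). nra. }
  split; [exact Hdecr | split; [exact Hmono|]].
  intros m n Hm Hmn. split.
  - pose proof (rsum_telescope_le _ E (4 * c0) m n
                  (fun k Hk => Hstep k ltac:(lia)) ltac:(lia)) as Htel.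
    pose proof (HE n). pose proof (pow2_ge_0 (hnorm (hsub (y n) (y (n - 1)%nat)))).
    apply (Rmult_le_reg_l (4 * c0)); [lra|].
    rewrite <- Rmult_assoc, Rinv_r, Rmult_1_l; nra.
  - replace (n - m)%nat with (S n - S m)%nat by lia.
    rewrite Rmult_assoc. apply rsum_ge_const. intros k Hk.
    pose proof (HE n). pose proof (nonincreasing_le E 1 k n Hmono ltac:(lia)). lra.
Qed.
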